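(* Let $h$ be a Hessenberg function on $\{1,\dots,n\}$. For $x^\alpha\in\mathcal{B}_h$, let $\Psi_h(x^\alpha)$ be the Level $n$ word of the $h$-tableau-tree lying directly above the leaf labelled $x^\alpha$. Then $\Psi_h$ is a well-defined map from $\mathcal{B}_h$ to the set of $(h,(n))$-fillings, it sends monomials of degree $r$ to fillings with exactly $r$ dimension pairs, and $\Phi(\Psi_h(x^\alpha))=x^\alpha$ for all $x^\alpha\in\mathcal{B}_h$; more precisely, for every $k\in\{2,\dots,n\}$, $|D^{\Psi_h(x^\alpha)}_k|=\alpha_k$.
   Context: A Hessenberg function is $h:\{1,\dots,n\}\to\{1,\dots,n\}$, $h_i=h(i)$, with $i\le h_i$ and $h_i\le h_{i+1}$; degree tuple $\beta_i=i-\#\{k:h_k<i\}$; $\mathcal{B}_h=\{x_1^{\alpha_1}\cdots x_n^{\alpha_n}:0\le\alpha_i\le\beta_i-1\}$. A word $u_1\cdots u_m$ of distinct numbers is $h$-permissible if $u_t\le h(u_{t+1})$ for all $t$; an $(h,(n))$-filling is an $h$-permissible permutation $T=w_1\cdots w_n$ of $1,\dots,n$ in one row. Dimension pairs of such $T$: $(a,b)$ with $b>a$, $b$ appearing to the left of $a$, and, if $a$ is immediately followed by $c$, $b\le h(c)$. $D^T_k$ is the set of dimension pairs $(a,k)$ and $\Phi(T)=\prod_{k=2}^n x_k^{|D^T_k|}$. The $h$-tableau-tree: Level 1 is the word $1$; a vertex at Level $i-1$ is an $h$-permissible word on $\{1,\dots,i-1\}$ whose $\beta_i$ bullet positions are the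 gaps where inserting $i$ keeps it $h$-permissible; its child along edge $x_i^j$ ($0\le j\le\beta_i-1$) inserts $i$ at the $(j+1)$-th bullet from the right. Each Level $n$ word has one leaf child (edge label $1$) labelled by the product of edge labels on its root path. *)

From mathcomp Require Import all_boot.
Set Implicit Arguments. Unset Strict Implicit. Unset Printing Implicit Defensive.

(* h : {1..n} -> {1..n} is a Hessenberg function (values outside 1..n ignored). *)
Definition hessenberg (n : nat) (h : nat -> nat) : Prop :=
  (forall i, 1 <= i <= n -> i <= h i <= n) /\
  (forall i, 1 <= i < n -> h i <= h i.+1).

Definition beta (n : nat) (h : nat -> nat) (i : nat) : nat :=
  i - count (fun k => h k < i) (iota 1 n).

Definition in_Bh (n : nat) (h : nat -> nat) (alpha : nat -> nat) : Prop :=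
  forall i, 1 <= i <= n -> alpha i < beta n h i.

Definition permissible (h : nat -> nat) (w : seq nat) : bool :=
  uniq w && sorted (fun a b => a <= h b) w.

Definition filling (n : nat) (h : nat -> nat) (T : seq nat) : bool :=
  perm_eq T (iota 1 n) && permissible h T.

(* insert i in the gap at position p (0 = leftmost gap, size w = rightmost) *)
Definition insert_at (p i : nat) (w : seq nat) : seq nat :=
  take p w ++ i :: drop p w.

Definition bullets (h : nat -> nat) (i : nat) (w : seq nat) : seq nat :=
  [seq p <- iota 0 (size w).+1 | permissible h (insert_at p i w)].

(* child along edge x_i^j: insert i at the (j+1)-th bullet from the right *)
Definition child (h : nat -> nat) (i j : nat) (w : seq nat) : seq nat :=
  insert_at (nth 0 (rev (bullets h i w)) j) i w.

(* word at Level m on the root path with edge labels x_2^{alpha_2}, ..., x_m^{alpha_m} *)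
Fixpoint tree_word (h : nat -> nat) (alpha : nat -> nat) (m : nat) : seq nat :=
  match m with
  | 0 => [::]
  | m'.+1 => if m' is 0 then [:: 1] else child h m (alpha m) (tree_word h alpha m')
  end.

Definition Psi (n : nat) (h : nat -> nat) (alpha : nat -> nat) : seq nat :=
  tree_word h alpha n.

Definition dimpair (h : nat -> nat) (T : seq nat) (a b : nat) : bool :=
  [&& a \in T, b \in T, a < b, index b T < index a T &
      (((index a T).+1 < size T) ==> (b <= h (nth 0 T (index a T).+1)))].

Definition dim_pairs (h : nat -> nat) (T : seq nat) : seq (nat * nat) :=
  [seq p <- [seq (a, b) | a <- T, b <- T] | dimpair h T p.1 p.2].

Definition Dk (h : nat -> nat) (T : seq nat) (k : nat) : seq (nat * nat) :=
  [seq p <- dim_pairs h T | p.2 == k].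

(* exponent vector of Phi(T) = prod_{k=2}^n x_k^{|D^T_k|} *)
Definition Phi_exp (h : nat -> nat) (T : seq nat) (k : nat) : nat :=
  if 2 <= k then size (Dk h T k) else 0.

(* Let [w] be the Level [i-1] word, a permissible arrangement of [1..i-1]. Every letter of
   [w] is below [i <= h i], so inserting [i] into a gap keeps the word permissible exactly
   when the gap is the right end or lies before a letter [c] with [i <= h c]; for a
   Hessenberg function there are [beta_i] such gaps.  The new dimension pairs [(a, i)] are
   the letters [a] right of [i] whose right-hand gap is a bullet, so the [(j+1)]-th bullet
   from the right creates exactly [j] of them.  The pairs [(a, k)] with [k < i] survive the
   insertion unchanged: the only letter acquiring [i] as right neighbour had one, [c], with
   [k < i <= h c] before. *)

From mathcomp Require Import all_boot zify.
Set Implicit Arguments. Unset Strict Implicit. Unset Printing Implicit Defensive.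

(* Gap [q] lies just before [nth 0 w q]; it can receive [i] when it is the right end or
   [i] may stand to the left of that letter. *)
Definition open_gap (h : nat -> nat) (i : nat) (w : seq nat) (q : nat) : bool :=
  (q == size w) || (i <= h (nth 0 w q)).

Lemma count_in_pred0 (T : eqType) (a : pred T) (s : seq T) :
  {in s, forall x, ~~ a x} -> count a s = 0.
Proof. by move=> Ha; apply/eqP; rewrite -leqn0 leqNgt -has_count; apply/hasPn. Qed.

Lemma perm_insert_at p i (w : seq nat) : perm_eq (insert_at p i w) (i :: w).
Proof.
by rewrite /insert_at -[in X in perm_eq _ X](cat_take_drop p w) -cat1s perm_catCA.
Qed.

Lemma insert_at_catl p i (s1 s2 : seq nat) : p <= size s1 ->
  insert_at p i (s1 ++ s2) = insert_at p i s1 ++ s2.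
Proof.
rewrite /insert_at take_cat drop_cat leq_eqVlt => /orP[/eqP->|->]; last by rewrite -catA.
by rewrite ltnn subnn take0 drop0 take_size drop_size cats0 -catA.
Qed.

Lemma insert_at_catr p i (s1 s2 : seq nat) : size s1 <= p ->
  insert_at p i (s1 ++ s2) = s1 ++ insert_at (p - size s1) i s2.
Proof. by move=> Hp; rewrite /insert_at take_cat drop_cat ltnNge Hp -catA. Qed.

Lemma sorted_cat_cons (r : rel nat) s1 s2 i : sorted r (s1 ++ s2) ->
  all (r^~ i) s1 -> sorted r (s1 ++ i :: s2) = (if s2 is c :: _ then r i c else true).
Proof.
case: s1 => [|a s1] /=; first by case: s2 => //= c s2 ->; rewrite andbT.
rewrite !cat_path /= => /andP[-> Hs2] /andP[Hai Hall].
have -> : r (last a s1) i.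
  by move: (mem_last a s1); rewrite inE => /predU1P[->//|]; apply: (allP Hall).
by case: s2 Hs2 => //= c s2 /andP[_ ->]; rewrite andbT.
Qed.

Lemma permissible_insert_at h i w p : permissible h w -> i \notin w ->
  {in w, forall x, x <= h i} -> p <= size w ->
  permissible h (insert_at p i w) = open_gap h i w p.
Proof.
move=> /andP[Hu Hs] Hi Hx Hp.
rewrite /permissible (perm_uniq (perm_insert_at p i w)) /= Hi Hu /= /insert_at.
rewrite sorted_cat_cons ?cat_take_drop //; last by apply/allP => x /mem_take/Hx.
rewrite /open_gap; case Hd: (drop p w) => [|c d]; have := congr1 size Hd; rewrite size_drop /=.
  by move=> Hsz; rewrite (_ : p = size w) ?eqxx //; lia.
by move=> Hsz; rewrite -[p]addn0 -nth_drop Hd addn0 (_ : p == size w = false) //; lia.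
Qed.

Lemma bulletsE h i w : permissible h w -> i \notin w -> {in w, forall x, x <= h i} ->
  bullets h i w = [seq p <- iota 0 (size w).+1 | open_gap h i w p].
Proof.
move=> Hw Hi Hx; apply: eq_in_filter => p; rewrite mem_iota => /andP[_ Hp].
exact: permissible_insert_at.
Qed.

Lemma mem_bullets h i w p : permissible h w -> i \notin w -> {in w, forall x, x <= h i} ->
  (p \in bullets h i w) = (p <= size w) && open_gap h i w p.
Proof. by move=> Hw Hi Hx; rewrite bulletsE // mem_filter mem_iota ltnS andbC. Qed.

Lemma size_bullets h i w : permissible h w -> i \notin w -> {in w, forall x, x <= h i} ->
  size (bullets h i w) = (count (fun x => i <= h x) w).+1.
Proof.
move=> Hw Hi Hx; rewrite bulletsE // size_filter -addn1 iotaD count_cat /= /open_gap.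
rewrite eqxx addn0 addn1 -[in RHS](mkseq_nth 0 w) /mkseq count_map.
congr _.+1; apply: eq_in_count => q; rewrite mem_iota add0n /= => Hq.
by rewrite (ltn_eqF Hq).
Qed.

Lemma child_bullet h i j w : j < size (bullets h i w) ->
  nth 0 (rev (bullets h i w)) j \in bullets h i w.
Proof. by move=> Hj; rewrite -mem_rev mem_nth // size_rev. Qed.

Lemma permissible_child h i j w : j < size (bullets h i w) -> permissible h (child h i j w).
Proof. by move/child_bullet; rewrite mem_filter => /andP[]. Qed.

Lemma count_le_hessenberg n h i : hessenberg n h -> 1 <= i <= n ->
  (count (fun x => i <= h x) (iota 1 i.-1)).+1 = beta n h i.
Proof.
case=> Hh _ /andP[]; case: i => // m _ Hmn; rewrite /beta /=.
rewrite -(subnKC (ltnW Hmn)) iotaD count_cat.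
have -> : count (fun k => h k < m.+1) (iota (1 + m) (n - m)) = 0.
  apply: count_in_pred0 => k.
  rewrite mem_iota => /andP[H1 H2]; have /andP[Hk _] : k <= h k <= n by apply: Hh; lia.
  by rewrite -leqNgt; lia.
have := count_predC (fun k => h k < m.+1) (iota 1 m); rewrite size_iota.
have -> : count (predC (fun k => h k < m.+1)) (iota 1 m) = count (fun x => m < h x) (iota 1 m).
  by apply: eq_count => x /=; rewrite -leqNgt.
lia.
Qed.

Definition dim_count (h : nat -> nat) (T : seq nat) (k : nat) : nat :=
  count (fun a => dimpair h T a k) T.

(* Number of letters [a] of [s] forming a dimension pair [(a, k)] when [k] stands to
   the left of [s]: the right neighbour of [a] must be a [c] with [k <= h c]. *)
Fixpoint tail_dimpairs (h : nat -> nat) (k : nat) (s : seq nat) : nat :=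
  if s is a :: s' then
    ((a < k) && (if s' is c :: _ then k <= h c else true)) + tail_dimpairs h k s'
  else 0.

Lemma count_dimpair_suffix h (k : nat) (P s : seq nat) : uniq (P ++ s) -> k \in P ->
  count (fun a => dimpair h (P ++ s) a k) s = tail_dimpairs h k s.
Proof.
elim: s P => [|a s IH] //= P Hu Hk; congr addn; last first.
  by rewrite -cat_rcons IH ?cat_rcons // mem_rcons inE Hk orbT.
have HaP : a \notin P by move: Hu; rewrite cat_uniq /= negb_or => /and3P[_ /andP[]].
rewrite /dimpair !mem_cat Hk mem_head orbT /= !index_cat Hk (negbTE HaP) /= eqxx addn0.
rewrite (index_mem k P) Hk /= size_cat /= nth_cat (_ : _.+1 < size P = false) ?subSnn; last by lia.
case: s {IH Hu} => [|c s] /=; first by rewrite addn1 ltnn andbT.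
by rewrite (_ : _.+1 < _ = true) //; lia.
Qed.

Lemma dim_count_cat_cons h (k : nat) (s1 s2 : seq nat) : uniq (s1 ++ k :: s2) ->
  dim_count h (s1 ++ k :: s2) k = tail_dimpairs h k s2.
Proof.
move=> Hu; have Hk1 : k \notin s1 by move: Hu; rewrite cat_uniq /= negb_or => /and3P[_ /andP[]].
rewrite /dim_count count_cat /= {2}/dimpair ltnn !andbF add0n -cat_rcons.
rewrite count_dimpair_suffix ?cat_rcons ?mem_rcons ?mem_head // -[RHS]add0n; congr addn.
apply: count_in_pred0 => a Ha.
rewrite /dimpair !index_cat Ha (negbTE Hk1) /= eqxx addn0.
have : index a s1 < size s1 by rewrite index_mem.
by apply/contraL => /and5P[_ _ _ ? _]; rewrite -leqNgt; lia.
Qed.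

Lemma tail_dimpairs_insert_at h (k m q : nat) (s : seq nat) : k < m -> k <= h m -> q <= size s ->
  open_gap h m s q -> tail_dimpairs h k (insert_at q m s) = tail_dimpairs h k s.
Proof.
move=> Hkm Hkh; have Hmk : (m < k) = false by apply/negbTE; lia.
elim: s q => [|a s IH] [|q] //=; rewrite ?Hmk // ltnS => Hq Hgap.
rewrite -/(insert_at q m s) IH //; congr (_ + _); congr andb.
case: q Hq Hgap {IH} => [|q] Hq; last by case: s Hq.
rewrite /insert_at take0 drop0 /= Hkh /open_gap.
by case: s Hq => [|c s] //= _ Hc; apply/esym; lia.
Qed.

Lemma open_gap_catr h i (s1 s2 : seq nat) q :
  open_gap h i (s1 ++ s2) (size s1 + q) = open_gap h i s2 q.
Proof. by rewrite /open_gap size_cat eqn_add2l nth_cat ltnNge leq_addr addKn. Qed.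

Lemma dim_count_insert_at h (k m p : nat) (w : seq nat) : uniq (insert_at p m w) -> k \in w ->
  k < m -> k <= h m -> p <= size w -> open_gap h m w p ->
  dim_count h (insert_at p m w) k = dim_count h w k.
Proof.
move=> Hu Hk Hkm Hkh.
have Hw : uniq w by move: Hu; rewrite (perm_uniq (perm_insert_at p m w)) => /andP[].
case/splitPr: Hk Hu Hw => s1 s2 Hu Hw.
case: (leqP p (size s1)) => Hps1.
  by move: Hu; rewrite insert_at_catl // => Hu _ _; rewrite !dim_count_cat_cons.
have [q Ep] : exists q, p = size s1 + q.+1 by exists (p - size s1).-1; lia.
subst p; move: Hu; rewrite insert_at_catr ?leq_addr // addKn /= => Hu.
rewrite !dim_count_cat_cons // size_cat /= leq_add2l ltnS open_gap_catr => Hq Hgap.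
exact: tail_dimpairs_insert_at.
Qed.

Lemma open_gap_drop h i p q (w : seq nat) : p <= size w ->
  open_gap h i (drop p w) q = open_gap h i w (p + q).
Proof.
by move=> Hp; rewrite -[in RHS](cat_take_drop p w) -[in p + q](size_takel Hp) open_gap_catr.
Qed.

Lemma tail_dimpairs_small h (k : nat) (s : seq nat) : all (fun x => x < k) s ->
  tail_dimpairs h k s = count (open_gap h k s) (iota 1 (size s)).
Proof.
elim: s => [|a s IH] //= /andP[-> Hs]; rewrite IH //= -(addn1 1) iotaDl count_map.
by congr addn; case: s {IH Hs}.
Qed.

Lemma count_gt_nth (s : seq nat) i : sorted ltn s -> i < size s ->
  count (fun x => nth 0 s i < x) s = size s - i.+1.
Proof.
elim: s i => [|a s IH] [|i] //= Hs Hi.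
  by rewrite ltnn add0n subn1; apply/eqP; rewrite -all_count; exact: order_path_min ltn_trans Hs.
have Hai : a < nth 0 s i by apply: (allP (order_path_min ltn_trans Hs)); apply: mem_nth.
by rewrite ltnNge ltnW //= IH //; apply: path_sorted Hs.
Qed.

Lemma dim_count_child_new h i j w : permissible h w -> i \notin w ->
  {in w, forall x, x < i} -> {in w, forall x, x <= h i} -> j < size (bullets h i w) ->
  dim_count h (child h i j w) i = j.
Proof.
move=> Hw Hi Hlt Hle Hj; rewrite /child; set bl := bullets h i w in Hj *.
set p := nth 0 (rev bl) j.
have Hsorted : sorted ltn bl by apply: sorted_filter; [apply: ltn_trans | apply: iota_ltn_sorted].
have /andP[Hpw _] : (p <= size w) && open_gap h i w p by rewrite -mem_bullets ?child_bullet.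
have -> : j = count (fun x => p < x) bl.
  by rewrite /p nth_rev // count_gt_nth //; lia.
rewrite dim_count_cat_cons; last by case/andP: (permissible_child Hj).
rewrite tail_dimpairs_small; last by apply/allP => x /mem_drop/Hlt.
rewrite /bl bulletsE // count_filter size_drop.
rewrite (_ : iota 0 (size w).+1 = iota 0 p.+1 ++ iota p.+1 (size w - p)); last first.
  by rewrite -iotaD; congr iota; lia.
rewrite count_cat (_ : count _ (iota 0 p.+1) = 0) ?add0n; last first.
  by apply: count_in_pred0 => x; rewrite mem_iota /= add0n => Hx; rewrite ltnNge -ltnS Hx.
rewrite [iota p.+1 _](_ : _ = map (addn p) (iota 1 (size w - p))) ?count_map; last first.
  by rewrite -iotaDl addn1.
apply: eq_in_count => q; rewrite mem_iota => /andP[Hq _] /=.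
by rewrite open_gap_drop // -[X in X < _]addn0 ltn_add2l Hq.
Qed.

Lemma dim_count_child_old h i j w k : permissible h w -> i \notin w ->
  {in w, forall x, x <= h i} -> j < size (bullets h i w) -> k \in w -> k < i ->
  dim_count h (child h i j w) k = dim_count h w k.
Proof.
move=> Hw Hi Hle Hj Hk Hki.
have /child_bullet := Hj; rewrite mem_bullets // => /andP[Hp Hgap].
by apply: dim_count_insert_at => //; [case/andP: (permissible_child Hj) | apply: Hle].
Qed.

Lemma tree_wordSS h alpha m :
  tree_word h alpha m.+2 = child h m.+2 (alpha m.+2) (tree_word h alpha m.+1).
Proof. by []. Qed.

Lemma perm_tree_word h alpha m : perm_eq (tree_word h alpha m) (iota 1 m).
Proof.
elim: m => [|[|m] IH] //; rewrite tree_wordSS (perm_trans (perm_insert_at _ _ _)) //.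
rewrite (_ : iota 1 m.+2 = rcons (iota 1 m.+1) m.+2); last first.
  by rewrite -cats1 -(iotaD 1 m.+1 1) addn1.
by rewrite perm_sym perm_rcons perm_cons perm_sym.
Qed.

Lemma mem_tree_word h alpha m x : (x \in tree_word h alpha m) = (1 <= x <= m).
Proof. by rewrite (perm_mem (perm_tree_word h alpha m)) mem_iota add1n ltnS. Qed.

Section TreeWord.

Variables (n : nat) (h : nat -> nat) (alpha : nat -> nat).
Hypotheses (hess : hessenberg n h) (alpha_in_Bh : in_Bh n h alpha).

Let tw := tree_word h alpha.

Lemma tree_word_letters i : 2 <= i <= n ->
  [/\ i \notin tw i.-1, {in tw i.-1, forall x, x < i} & {in tw i.-1, forall x, x <= h i}].
Proof.
move=> Hi; have /andP[Hii _] : i <= h i <= n by apply: hess.1; lia.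
by split=> [|x|x]; rewrite mem_tree_word; lia.
Qed.

Lemma size_bullets_tree_word i : 2 <= i <= n -> permissible h (tw i.-1) ->
  size (bullets h i (tw i.-1)) = beta n h i.
Proof.
move=> Hi Hw; have [Hnotin _ Hle] := tree_word_letters Hi.
rewrite size_bullets // (permP (perm_tree_word h alpha i.-1)) (count_le_hessenberg hess) //; lia.
Qed.

Lemma permissible_tree_word m : m <= n -> permissible h (tw m).
Proof.
elim: m => [|[|m] IH] // Hm; apply: permissible_child.
by rewrite (size_bullets_tree_word (i := m.+2)) ?IH //; [apply: alpha_in_Bh|]; lia.
Qed.

Lemma alpha1 : 1 <= n -> alpha 1 = 0.
Proof. by move=> Hn; have := alpha_in_Bh (i := 1); rewrite /beta; lia. Qed.

Lemma dim_count_tree_word m k : m <= n -> 1 <= k <= m -> dim_count h (tw m) k = alpha k.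
Proof.
elim: m k => [|[|m] IH] k Hm Hk; first by lia.
  by rewrite (_ : k = 1) ?alpha1 //; lia.
have Hi : 2 <= m.+2 <= n by lia.
have [Hnotin Hlt Hle] := tree_word_letters Hi.
have Hw := permissible_tree_word (ltnW Hm).
have Hj : alpha m.+2 < size (bullets h m.+2 (tw m.+1)).
  by rewrite size_bullets_tree_word //; apply: alpha_in_Bh; lia.
have [->|Hkm] := eqVneq k m.+2; first exact: dim_count_child_new.
rewrite /tw tree_wordSS dim_count_child_old ?IH ?mem_tree_word //; lia.
Qed.

End TreeWord.

Lemma count_sum (T : Type) (a : pred T) (s : seq T) : count a s = \sum_(x <- s) a x.
Proof. by rewrite -sumn_count sumnE big_map. Qed.

Lemma count_allpairs (P : nat -> nat -> bool) (s t : seq nat) :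
  count (fun p => P p.1 p.2) [seq (a, b) | a <- s, b <- t] = \sum_(a <- s) count (P a) t.
Proof.
elim: s => [|a s IH]; first by rewrite big_nil.
by rewrite allpairs_cons count_cat IH big_cons count_map.
Qed.

Lemma size_dim_pairs h T : size (dim_pairs h T) = \sum_(k <- T) dim_count h T k.
Proof.
rewrite size_filter count_allpairs.
under eq_bigr do rewrite count_sum.
rewrite exchange_big.
by apply: eq_bigr => k _; rewrite /dim_count count_sum.
Qed.

Lemma size_Dk h T k : uniq T -> size (Dk h T k) = dim_count h T k.
Proof.
move=> Hu; rewrite size_filter count_filter.
rewrite (count_allpairs (fun a b => (b == k) && dimpair h T a b)).
rewrite /dim_count count_sum; apply: eq_bigr => a _; case Hak: (dimpair h T a k).
  have Hk : k \in T by case/and5P: Hak.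
  rewrite -Hk -(count_uniq_mem k Hu); apply: eq_count => b /=.
  by case: eqVneq => [->|]; rewrite ?Hak.
by apply: count_in_pred0 => b _; apply/negP => /andP[/eqP-> ]; rewrite Hak.
Qed.

Theorem mainTheorem17 (n : nat) (h : nat -> nat) (alpha : nat -> nat) :
  hessenberg n h -> in_Bh n h alpha ->
  [/\ (forall i, 2 <= i <= n ->
         size (bullets h i (tree_word h alpha i.-1)) = beta n h i),
      filling n h (Psi n h alpha),
      size (dim_pairs h (Psi n h alpha)) = \sum_(1 <= i < n.+1) alpha i,
      (forall k, 1 <= k <= n -> Phi_exp h (Psi n h alpha) k = alpha k) &
      (forall k, 2 <= k <= n -> size (Dk h (Psi n h alpha) k) = alpha k)].
Proof.
move=> hess Balpha; rewrite /Psi.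
have Hperm := perm_tree_word h alpha n.
have Hperm_n := permissible_tree_word hess Balpha (leqnn n).
have Hdim k : 1 <= k <= n -> dim_count h (tree_word h alpha n) k = alpha k.
  exact: (dim_count_tree_word hess Balpha (leqnn n)).
have Hu : uniq (tree_word h alpha n) by case/andP: Hperm_n.
split.
- move=> i Hi; apply: size_bullets_tree_word => //.
  by apply: (permissible_tree_word hess Balpha); lia.
- exact/andP.
- rewrite size_dim_pairs (perm_big _ Hperm) /index_iota subn1 /=.
  by apply: eq_big_seq => k; rewrite mem_iota => Hk; apply: Hdim; lia.
- move=> k Hk; rewrite /Phi_exp; case: ifP => [_|/negbT Hk2]; first by rewrite size_Dk // Hdim.
  by rewrite (_ : k = 1) ?(alpha1 Balpha) //; lia.
- by move=> k Hk; rewrite size_Dk // Hdim //; lia.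
Qed.
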